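(* Let $L=E[C_1,\dots,C_n]$ be a congruence normal lattice. Then $L$ is left modular if and only if, for every $i\in[n]$, the heart $H(C_i)$ contains an element lying on a maximal left modular chain of $E[C_1,\dots,C_{i-1}]$.
   Context: All lattices are finite. A subset $C$ of a poset is convex if $x,y\in C$ implies $[x,y]\subseteq C$. For a convex subset $C$ of a lattice $L$, let $I_L(C)=\{y\in L\mid \exists x\in C,\ y\le x\}$. The doubling $L[C]$ is the subposet of $L\times\{0<1\}$ (product order) on the set $\big(I_L(C)\times\{0\}\big)\sqcup\big(((L\setminus I_L(C))\cup C)\times\{1\}\big)$; it is a lattice. $E[\,]$ is the one-element lattice and $E[C_1,\dots,C_{i+1}]:=E[C_1,\dots,C_i][C_{i+1}]$, where each $C_{i+1}$ is a nonempty convex subset of $E[C_1,\dots,C_i]$. The heart $H(C)$ of a convex subset $C$ is the set of elements of $C$ that are below all maximal elements of $C$ and above all minimal elements of $C$. An element $a$ of a lattice is left modular if for all $b<c$ one has $(b\vee a)\wedge c=b\vee(a\wedge c)$. A maximal left modular chain is a maximal chain all of whose elements are left modular; a lattice is left modular if it has a maximal left modular chain. *)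

From mathcomp Require Import all_boot.
Set Implicit Arguments. Unset Strict Implicit. Unset Printing Implicit Defensive.

(* Concrete model: the doubling L[C] is a subposet of L x {0<1}, so every
   lattice E[C_1,...,C_i] is a finite subposet of {0,1}^i with the product
   order.  Elements are bit-lists (new coordinate appended at the end), a
   finite poset is a list of such elements. *)
Definition elt := seq bool.

Definition le (x y : elt) : bool := all2 implb x y.
Definition lt (x y : elt) : bool := (x != y) && le x y.

Definition is_lub (S : seq elt) (x y z : elt) : bool :=
  [&& z \in S, le x z, le y z & all (fun w => (le x w && le y w) ==> le z w) S].
Definition is_glb (S : seq elt) (x y z : elt) : bool :=
  [&& z \in S, le z x, le z y & all (fun w => (le w x && le w y) ==> le w z) S].
Definition join (S : seq elt) (x y : elt) : elt := nth [::] S (find (is_lub S x y) S).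
Definition meet (S : seq elt) (x y : elt) : elt := nth [::] S (find (is_glb S x y) S).

Definition convex (S C : seq elt) : Prop :=
  forall x y z, x \in C -> y \in C -> z \in S -> le x z -> le z y -> z \in C.

Definition downset (S C : seq elt) : seq elt :=
  [seq y <- S | has (fun x => le y x) C].

Definition doubling (S C : seq elt) : seq elt :=
  [seq rcons y false | y <- S & y \in downset S C] ++
  [seq rcons y true  | y <- S & (y \notin downset S C) || (y \in C)].

Definition Elat (Cs : seq (seq elt)) : seq elt := foldl doubling [:: [::]] Cs.

Definition valid_seq (Cs : seq (seq elt)) : Prop :=
  forall i, i < size Cs ->
    [/\ nth [::] Cs i != [::],
        {subset nth [::] Cs i <= Elat (take i Cs)} &
        convex (Elat (take i Cs)) (nth [::] Cs i)].

Definition is_maximal_in (C : seq elt) (m : elt) : bool :=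
  (m \in C) && ~~ has (fun c => lt m c) C.
Definition is_minimal_in (C : seq elt) (m : elt) : bool :=
  (m \in C) && ~~ has (fun c => lt c m) C.
Definition heart (C : seq elt) : seq elt :=
  [seq x <- C | all (fun m => is_maximal_in C m ==> le x m) C &&
                all (fun m => is_minimal_in C m ==> le m x) C].

Definition left_modular_elt (S : seq elt) (a : elt) : Prop :=
  forall b c, b \in S -> c \in S -> lt b c ->
    meet S (join S b a) c = join S b (meet S a c).

Definition chain_in (S K : seq elt) : Prop :=
  {subset K <= S} /\ (forall x y, x \in K -> y \in K -> le x y || le y x).
Definition maximal_chain (S K : seq elt) : Prop :=
  chain_in S K /\
  (forall z, z \in S -> (forall x, x \in K -> le x z || le z x) -> z \in K).

Definition maximal_left_modular_chain (S K : seq elt) : Prop :=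
  maximal_chain S K /\ (forall a, a \in K -> left_modular_elt S a).

Definition left_modular_lattice (S : seq elt) : Prop :=
  exists K, maximal_left_modular_chain S K.

From mathcomp Require Import all_boot.
Set Implicit Arguments. Unset Strict Implicit. Unset Printing Implicit Defensive.

(* Write L = E[C_1,...,C_(n-1)] and C = C_n, so that E[C_1,...,C_n] = L[C].
   By induction on n it suffices to show that L[C] is left modular iff some
   element x of H(C) lies on a maximal left modular chain K of L.

   Given x and K, the chain {(k,0) | k <= x} U {(k,1) | x <= k} of L[C] is
   maximal, and its elements are left modular: in the modular law for (k,e)
   the first coordinates agree because k is left modular in L, and the new
   coordinates could only differ at some m in C, which is excluded because a
   maximal (resp. minimal) element of C above (resp. below) m lies above
   (resp. below) x.

   Conversely, a maximal left modular chain of L[C] projects onto a maximal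
   left modular chain of L.  Testing the modular law at (y,0) and (y,1) on
   the pairs (w,0) < (w,1), w in C, shows that y \/ w lies in I_L(C) and
   y /\ w does not lie in I_L(C) \ C.  This forces the chain through a
   doubled pair (c,0) < (c,1), and then c \/ M = M and c /\ m = m for all
   maximal M and minimal m of C, i.e. c lies in H(C). *)

Lemma lexx x : le x x.
Proof. by elim: x => //= u x ->; rewrite implybb. Qed.

Lemma le_trans x y z : le x y -> le y z -> le x z.
Proof.
elim: x y z => [|u x IH] [|v y] [|w z] //= /andP[uv xy] /andP[vw yz].
by rewrite (IH _ _ xy yz); case: u v w uv vw => [] [] [].
Qed.

Lemma le_anti x y : le x y -> le y x -> x = y.
Proof.
elim: x y => [|u x IH] [|v y] //= /andP[uv xy] /andP[vu yx].
by rewrite (IH _ xy yx); case: u v uv vu => [] [].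
Qed.

Lemma le_rcons x y a b : le (rcons x a) (rcons y b) = le x y && (a ==> b).
Proof.
elim: x y => [|u x IH] [|v y] /=; rewrite ?andbT //.
- by case: y => [|? ?] /=; rewrite andbF.
- by case: (x) => [|? ?] /=; rewrite andbF.
- by rewrite IH andbA.
Qed.

Lemma lt_le x y : lt x y -> le x y.
Proof. by case/andP. Qed.

Lemma lt_le_trans x y z : lt x y -> le y z -> lt x z.
Proof.
case/andP=> nxy xy yz; rewrite /lt (le_trans xy yz) andbT.
by apply: contra nxy => /eqP ezx; rewrite -ezx in yz; rewrite (le_anti xy yz).
Qed.

Lemma ltxx x : lt x x = false.
Proof. by rewrite /lt eqxx. Qed.

Lemma count_lt_subpred (T : eqType) (a b : pred T) s c : subpred a b ->
  c \in s -> b c -> ~~ a c -> count a s < count b s.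
Proof.
move=> sub_ab; elim: s => //= y s IH; rewrite inE => /orP[/eqP <-|cs] bc nac.
  by rewrite (negbTE nac) bc add0n add1n ltnS sub_count.
rewrite -addnS leq_add ?IH //.
by case ay: (a y) => //; rewrite (sub_ab _ ay).
Qed.

Lemma exists_maximal_above C m : m \in C ->
  exists2 M, is_maximal_in C M & le m M.
Proof.
have [n] := ubnP (count (lt m) C); elim: n m => // n IH m cnt_m mC.
have [/hasP[c cC mc] | no_above] := boolP (has (lt m) C); last first.
  by exists m; rewrite ?lexx // /is_maximal_in mC.
have [|M maxM cM] := IH c _ cC; last by exists M => //; apply: le_trans (lt_le mc) cM.
rewrite ltnS in cnt_m; apply: leq_trans _ cnt_m.
apply: (count_lt_subpred (c := c)); rewrite ?ltxx // => z /lt_le.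
exact: lt_le_trans mc.
Qed.

Lemma exists_minimal_below C m : m \in C ->
  exists2 M, is_minimal_in C M & le M m.
Proof.
have [n] := ubnP (count (lt^~ m) C); elim: n m => // n IH m cnt_m mC.
have [/hasP[c cC cm] | no_below] := boolP (has (lt^~ m) C); last first.
  by exists m; rewrite ?lexx // /is_minimal_in mC.
have [|M minM Mc] := IH c _ cC; last by exists M => //; apply: le_trans Mc (lt_le cm).
rewrite ltnS in cnt_m; apply: leq_trans _ cnt_m.
apply: (count_lt_subpred (c := c)); rewrite ?ltxx // => z /lt_le_trans.
by apply; apply: lt_le.
Qed.

Lemma maximal_in_le_eq C M y : is_maximal_in C M -> y \in C -> le M y -> y = M.
Proof.
case/andP=> _ /hasPn no_above yC My; apply/eqP; apply: contraNT (no_above y yC).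
by rewrite /lt eq_sym => ->.
Qed.

Lemma minimal_in_le_eq C m y : is_minimal_in C m -> y \in C -> le y m -> y = m.
Proof.
case/andP=> _ /hasPn no_below yC ym; apply/eqP; apply: contraNT (no_below y yC).
by rewrite /lt => ->.
Qed.

Definition totally_ordered (s : seq elt) : Prop :=
  forall x y, x \in s -> y \in s -> le x y || le y x.

Lemma chain_has_max s (P : pred elt) : totally_ordered s -> has P s ->
  exists2 m, (m \in s) && P m & forall y, y \in s -> P y -> le y m.
Proof.
move=> tot /hasP[a aS Pa]; set sP := [seq y <- s | P y].
have [|M maxM _] := @exists_maximal_above sP a; first by rewrite mem_filter Pa.
have := proj1 (andP maxM); rewrite mem_filter => /andP[PM MS].
exists M => [|y yS Py]; first by rewrite MS.
have yP : y \in sP by rewrite mem_filter Py.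
by case/orP: (tot _ _ MS yS) => // /(maximal_in_le_eq maxM yP)->; apply: lexx.
Qed.

Lemma chain_has_min s (P : pred elt) : totally_ordered s -> has P s ->
  exists2 m, (m \in s) && P m & forall y, y \in s -> P y -> le m y.
Proof.
move=> tot /hasP[a aS Pa]; set sP := [seq y <- s | P y].
have [|M minM _] := @exists_minimal_below sP a; first by rewrite mem_filter Pa.
have := proj1 (andP minM); rewrite mem_filter => /andP[PM MS].
exists M => [|y yS Py]; first by rewrite MS.
have yP : y \in sP by rewrite mem_filter Py.
by case/orP: (tot _ _ MS yS) => // /(minimal_in_le_eq minM yP)->; apply: lexx.
Qed.

Definition lattice (S : seq elt) : Prop :=
  forall x y, x \in S -> y \in S -> has (is_lub S x y) S && has (is_glb S x y) S.

Lemma lub_eq_join S x y z : is_lub S x y z -> join S x y = z.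
Proof.
move=> lub_z; have /(nth_find [::]) : has (is_lub S x y) S.
  by apply/hasP; exists z => //; case/and4P: lub_z.
case/and4P: lub_z => zS xz yz /allP z_least.
case/and4P => jS xj yj /allP j_least.
by apply: le_anti; [have := j_least z zS | have := z_least _ jS];
  rewrite ?xz ?yz ?xj ?yj.
Qed.

Lemma glb_eq_meet S x y z : is_glb S x y z -> meet S x y = z.
Proof.
move=> glb_z; have /(nth_find [::]) : has (is_glb S x y) S.
  by apply/hasP; exists z => //; case/and4P: glb_z.
case/and4P: glb_z => zS zx zy /allP z_greatest.
case/and4P => mS mx my /allP m_greatest.
by apply: le_anti; [have := z_greatest _ mS | have := m_greatest z zS];
  rewrite ?zx ?zy ?mx ?my.
Qed.

Section Lattice.
Variable S : seq elt.
Hypothesis latS : lattice S.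

Lemma joinP x y : x \in S -> y \in S -> is_lub S x y (join S x y).
Proof. by move=> xS yS; apply: nth_find; case/andP: (latS xS yS). Qed.

Lemma meetP x y : x \in S -> y \in S -> is_glb S x y (meet S x y).
Proof. by move=> xS yS; apply: nth_find; case/andP: (latS xS yS). Qed.

Lemma join_in x y : x \in S -> y \in S -> join S x y \in S.
Proof. by move=> xS yS; case/and4P: (joinP xS yS). Qed.

Lemma le_joinl x y : x \in S -> y \in S -> le x (join S x y).
Proof. by move=> xS yS; case/and4P: (joinP xS yS). Qed.

Lemma le_joinr x y : x \in S -> y \in S -> le y (join S x y).
Proof. by move=> xS yS; case/and4P: (joinP xS yS). Qed.

Lemma join_le x y w : x \in S -> y \in S -> w \in S ->
  le x w -> le y w -> le (join S x y) w.
Proof.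
move=> xS yS wS xw yw; case/and4P: (joinP xS yS) => _ _ _ /allP /(_ w wS).
by rewrite xw yw.
Qed.

Lemma meet_in x y : x \in S -> y \in S -> meet S x y \in S.
Proof. by move=> xS yS; case/and4P: (meetP xS yS). Qed.

Lemma le_meetl x y : x \in S -> y \in S -> le (meet S x y) x.
Proof. by move=> xS yS; case/and4P: (meetP xS yS). Qed.

Lemma le_meetr x y : x \in S -> y \in S -> le (meet S x y) y.
Proof. by move=> xS yS; case/and4P: (meetP xS yS). Qed.

Lemma le_meet x y w : x \in S -> y \in S -> w \in S ->
  le w x -> le w y -> le w (meet S x y).
Proof.
move=> xS yS wS wx wy; case/and4P: (meetP xS yS) => _ _ _ /allP /(_ w wS).
by rewrite wx wy.
Qed.

Lemma meet_join_absorb x y : x \in S -> y \in S -> meet S (join S x y) x = x.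
Proof.
move=> xS yS; have jS := join_in xS yS.
apply: le_anti; first exact: le_meetr.
by apply: le_meet; rewrite ?lexx ?le_joinl.
Qed.

Lemma join_meet_absorb x y : x \in S -> y \in S -> join S x (meet S y x) = x.
Proof.
move=> xS yS; have mS := meet_in yS xS.
apply: le_anti; last exact: le_joinl.
by apply: join_le; rewrite ?lexx ?le_meetr.
Qed.

Lemma join_meet_le_meet_join a b c : a \in S -> b \in S -> c \in S -> le b c ->
  le (join S b (meet S a c)) (meet S (join S b a) c).
Proof.
move=> aS bS cS bc; have acS := meet_in aS cS; have baS := join_in bS aS.
apply: le_meet; rewrite ?join_in //; apply: join_le => //.
- exact: le_joinl.
- exact: le_trans (le_meetl aS cS) (le_joinr bS aS).
- exact: le_meetr.
Qed.

Lemma left_modular_elt_of_le a : a \in S ->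
  (forall b c, b \in S -> c \in S -> lt b c ->
     le (meet S (join S b a) c) (join S b (meet S a c))) ->
  left_modular_elt S a.
Proof.
move=> aS hle b c bS cS bc; apply: le_anti; first exact: hle.
exact/join_meet_le_meet_join/lt_le.
Qed.

Lemma left_modular_law_le a b c : left_modular_elt S a ->
  a \in S -> b \in S -> c \in S -> le b c ->
  meet S (join S b a) c = join S b (meet S a c).
Proof.
move=> lm_a aS bS cS bc; have [<-|nbc] := eqVneq b c.
  by rewrite meet_join_absorb ?join_meet_absorb.
by apply: lm_a => //; rewrite /lt nbc.
Qed.

End Lattice.

Lemma mem_map_rcons (s : seq elt) y a b :
  (rcons y b \in [seq rcons z a | z <- s]) = (a == b) && (y \in s).
Proof.
have [<-|nab] := eqVneq a b; first exact: (mem_map (@rcons_injl _ a)).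
by apply/mapP => -[z _ /rcons_inj[_ eba]]; rewrite eba eqxx in nab.
Qed.

Lemma comparable_rcons y z a b :
  le (rcons y a) (rcons z b) || le (rcons z b) (rcons y a) -> le y z || le z y.
Proof. by rewrite !le_rcons => /orP[/andP[-> _]|/andP[-> _]]; rewrite ?orbT. Qed.

Definition lift_chain (K : seq elt) (x : elt) : seq elt :=
  [seq rcons k false | k <- K & le k x] ++ [seq rcons k true | k <- K & le x k].

Lemma mem_lift_chain K x y b :
  (rcons y b \in lift_chain K x) = (y \in K) && (if b then le x y else le y x).
Proof.
rewrite mem_cat !mem_map_rcons !mem_filter.
by case: b; case: (y \in K); rewrite /= ?andbT ?andbF ?orbF.
Qed.

Lemma lift_chain_rcons K x w : w \in lift_chain K x -> exists y b, w = rcons y b.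
Proof. by rewrite mem_cat => /orP[] /mapP[y _ ->]; exists y; eexists. Qed.

Lemma heartP x C : reflect
  [/\ x \in C, forall M, is_maximal_in C M -> le x M &
       forall m, is_minimal_in C m -> le m x]
  (x \in heart C).
Proof.
rewrite mem_filter; apply: (iffP idP).
  case/andP=> /andP[/allP below_max /allP above_min] xC; split=> // [M maxM|m minm].
    by have /implyP := below_max M (proj1 (andP maxM)); apply.
  by have /implyP := above_min m (proj1 (andP minm)); apply.
case=> xC below_max above_min; rewrite xC andbT.
by apply/andP; split; apply/allP => y _; apply/implyP;
  [apply: below_max | apply: above_min].
Qed.

Section Doubling.
Variables S C : seq elt.
Hypotheses (latS : lattice S) (CS : {subset C <= S}) (convexC : convex S C).

Definition down y := y \in downset S C.
Definition up y := (y \notin downset S C) || (y \in C).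
Local Notation T := (doubling S C).

Lemma downP y : down y = (y \in S) && has (le y) C.
Proof. by rewrite /down mem_filter andbC. Qed.

Lemma down_C y : y \in C -> down y.
Proof. by move=> yC; rewrite downP CS //=; apply/hasP; exists y; rewrite ?lexx. Qed.

Lemma up_C y : y \in C -> up y.
Proof. by move=> yC; rewrite /up yC orbT. Qed.

Lemma up_notdown y : ~~ down y -> up y.
Proof. by rewrite /up => ->. Qed.

Lemma C_down_up y : down y -> up y -> y \in C.
Proof. by rewrite /up /down => ->. Qed.

Lemma down_le y z : down z -> y \in S -> le y z -> down y.
Proof.
rewrite !downP => /andP[_ /hasP[c cC zc]] yS yz; rewrite yS.
by apply/hasP; exists c => //; apply: le_trans yz zc.
Qed.

Lemma up_le y z : up y -> y \in S -> z \in S -> le y z -> up z.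
Proof.
move=> up_y yS zS yz; have [down_z|] := boolP (down z); last exact: up_notdown.
have yC : y \in C by apply: C_down_up up_y; apply: down_le yz.
apply: up_C; move: down_z; rewrite downP => /andP[_ /hasP[c cC zc]].
exact: (convexC yC cC).
Qed.

Lemma mem_doubling y b :
  (rcons y b \in T) = (y \in S) && (if b then up y else down y).
Proof.
rewrite mem_cat !mem_map_rcons /up /down !mem_filter.
by case: (b); case: (y \in S); rewrite /= ?andbT ?andbF ?orbF.
Qed.

Lemma doubling_rcons w : w \in T -> exists y b, w = rcons y b.
Proof. by rewrite mem_cat => /orP[] /mapP[y _ ->]; exists y; eexists. Qed.

Lemma mem_doubling_base y b : rcons y b \in T -> y \in S.
Proof. by rewrite mem_doubling => /andP[]. Qed.

Lemma lub_doubling x y a b : rcons x a \in T -> rcons y b \in T ->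
  is_lub T (rcons x a) (rcons y b)
    (rcons (join S x y) (a || b || ~~ down (join S x y))).
Proof.
rewrite !mem_doubling => /andP[xS hxa] /andP[yS hyb].
have jS := join_in latS xS yS.
have xj := le_joinl latS xS yS; have yj := le_joinr latS xS yS.
apply/and4P; split.
- rewrite mem_doubling jS /=; case: a hxa => [up_x|_]; first exact: up_le xj.
  case: b hyb => [up_y|_]; first exact: up_le yj.
  by case: (boolP (down _)) => //; apply: up_notdown.
- by rewrite le_rcons xj; case: (a).
- by rewrite le_rcons yj; case: (a); case: (b).
- apply/allP => _ /[dup] /doubling_rcons[z [c ->]].
  rewrite mem_doubling !le_rcons => /andP[zS hzc].
  apply/implyP => /andP[/andP[xz ac] /andP[yz bc]].
  have jz := join_le latS xS yS zS xz yz; rewrite jz /=.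
  case: c hzc ac bc => [_ _ _|down_z]; first by rewrite implybT.
  by rewrite !implybF => /negbTE-> /negbTE->; rewrite (down_le down_z jS jz).
Qed.

Lemma glb_doubling x y a b : rcons x a \in T -> rcons y b \in T ->
  is_glb T (rcons x a) (rcons y b)
    (rcons (meet S x y) [&& a, b & up (meet S x y)]).
Proof.
rewrite !mem_doubling => /andP[xS hxa] /andP[yS hyb].
have mS := meet_in latS xS yS.
have mx := le_meetl latS xS yS; have my := le_meetr latS xS yS.
apply/and4P; split.
- rewrite mem_doubling mS /=; case: a hxa => [_|down_x]; last exact: down_le mx.
  case: b hyb => [_|down_y]; last exact: down_le my.
  by case: (boolP (up _)) => //; rewrite /up negb_or negbK => /andP[].
- by rewrite le_rcons mx; case: (a); case: (b); rewrite ?implybT.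
- by rewrite le_rcons my; case: (a); case: (b); rewrite ?implybT.
- apply/allP => _ /[dup] /doubling_rcons[z [c ->]].
  rewrite mem_doubling !le_rcons => /andP[zS hzc].
  apply/implyP => /andP[/andP[zx ca] /andP[zy cb]].
  have zm := le_meet latS xS yS zS zx zy; rewrite zm /=.
  case: c hzc ca cb => [up_z|_] //= -> ->.
  exact: up_le up_z zS mS zm.
Qed.

Lemma join_doubling x y a b : rcons x a \in T -> rcons y b \in T ->
  join T (rcons x a) (rcons y b) =
    rcons (join S x y) (a || b || ~~ down (join S x y)).
Proof. by move=> xT yT; apply/lub_eq_join/lub_doubling. Qed.

Lemma meet_doubling x y a b : rcons x a \in T -> rcons y b \in T ->
  meet T (rcons x a) (rcons y b) =
    rcons (meet S x y) [&& a, b & up (meet S x y)].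
Proof. by move=> xT yT; apply/glb_eq_meet/glb_doubling. Qed.

Lemma join_doubling_in x y a b : rcons x a \in T -> rcons y b \in T ->
  rcons (join S x y) (a || b || ~~ down (join S x y)) \in T.
Proof. by move=> xT yT; case/and4P: (lub_doubling xT yT). Qed.

Lemma meet_doubling_in x y a b : rcons x a \in T -> rcons y b \in T ->
  rcons (meet S x y) [&& a, b & up (meet S x y)] \in T.
Proof. by move=> xT yT; case/and4P: (glb_doubling xT yT). Qed.

Lemma meet_join_doubling b a c e f g :
  rcons b e \in T -> rcons a f \in T -> rcons c g \in T ->
  meet T (join T (rcons b e) (rcons a f)) (rcons c g) =
    rcons (meet S (join S b a) c)
      [&& e || f || ~~ down (join S b a), g & up (meet S (join S b a) c)].
Proof.
move=> bT aT cT.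
by rewrite (join_doubling bT aT) (meet_doubling (join_doubling_in bT aT) cT).
Qed.

Lemma join_meet_doubling b a c e f g :
  rcons b e \in T -> rcons a f \in T -> rcons c g \in T ->
  join T (rcons b e) (meet T (rcons a f) (rcons c g)) =
    rcons (join S b (meet S a c))
      (e || [&& f, g & up (meet S a c)] || ~~ down (join S b (meet S a c))).
Proof.
move=> bT aT cT.
by rewrite (meet_doubling aT cT) (join_doubling bT (meet_doubling_in aT cT)).
Qed.

Lemma lattice_doubling : lattice T.
Proof.
move=> _ _ /[dup] /doubling_rcons[x [a ->]] xT /[dup] /doubling_rcons[y [b ->]] yT.
apply/andP; split; apply/hasP.
  by eexists; last exact: lub_doubling; case/and4P: (lub_doubling xT yT).
by eexists; last exact: glb_doubling; case/and4P: (glb_doubling xT yT).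
Qed.

Lemma doubled_lt w : w \in C ->
  [/\ rcons w false \in T, rcons w true \in T & lt (rcons w false) (rcons w true)].
Proof.
move=> wC; rewrite !mem_doubling CS ?down_C ?up_C //; split=> //.
by rewrite /lt le_rcons lexx andbT; apply/eqP => /rcons_inj[].
Qed.

Lemma left_modular_elt_proj a e : rcons a e \in T ->
  left_modular_elt T (rcons a e) -> left_modular_elt S a.
Proof.
move=> aT lm_a b c bS cS /andP[nbc bc].
have bT : rcons b (~~ down b) \in T.
  by rewrite mem_doubling bS; case: (boolP (down b)) => //; apply: up_notdown.
have cT : rcons c (up c) \in T.
  rewrite mem_doubling cS; case: (boolP (up c)) => //.
  by rewrite /up negb_or negbK => /andP[].
have bc_lift : lt (rcons b (~~ down b)) (rcons c (up c)).
  rewrite /lt le_rcons bc; apply/andP; split.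
    by apply: contra nbc => /eqP/rcons_inj[->].
  by apply/implyP => nb; apply: up_notdown; apply: contra nb => /down_le; apply.
have := lm_a _ _ bT cT bc_lift.
by rewrite meet_join_doubling // join_meet_doubling // => /rcons_inj[].
Qed.

Lemma left_modular_bit0_join x w : rcons x false \in T ->
  left_modular_elt T (rcons x false) -> w \in C -> down (join S w x).
Proof.
move=> xT lm_x wC; have [w0T w1T w01] := doubled_lt wC.
have wS := CS wC; have xS := mem_doubling_base xT.
have := lm_x _ _ w0T w1T w01.
rewrite meet_join_doubling // join_meet_doubling //.
rewrite meet_join_absorb // join_meet_absorb // (up_C wC) (down_C wC) /= andbT.
by case/rcons_inj; case: (down _).
Qed.

Lemma left_modular_bit1_meet y w : rcons y true \in T ->
  left_modular_elt T (rcons y true) -> w \in C -> up (meet S y w).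
Proof.
move=> yT lm_y wC; have [w0T w1T w01] := doubled_lt wC.
have wS := CS wC; have yS := mem_doubling_base yT.
have := lm_y _ _ w0T w1T w01.
rewrite meet_join_doubling // join_meet_doubling //.
rewrite meet_join_absorb // join_meet_absorb // (up_C wC) (down_C wC) /= orbF.
by case/rcons_inj.
Qed.

Lemma left_modular_lift0 k x : k \in S -> left_modular_elt S k ->
  x \in heart C -> le k x -> left_modular_elt T (rcons k false).
Proof.
move=> kS lm_k /heartP[xC below_max _] kx.
have kT : rcons k false \in T.
  by rewrite mem_doubling kS; apply: down_le (down_C xC) kS kx.
apply: (left_modular_elt_of_le lattice_doubling kT).
move=> _ _ /[dup] /doubling_rcons[b [e ->]] bT /[dup] /doubling_rcons[c [f ->]] cT.
rewrite /lt le_rcons => /andP[_ /andP[bc _]].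
have bS := mem_doubling_base bT; have cS := mem_doubling_base cT.
rewrite meet_join_doubling // join_meet_doubling //.
rewrite (left_modular_law_le latS lm_k) // le_rcons lexx orbF /=.
set m := join S b (meet S k c); have kcS := meet_in latS kS cS.
have mS : m \in S by apply: join_in.
have bm : le b m by apply: le_joinl.
apply/implyP => /and3P[+ _ up_m]; case: (e) => //= not_down_bk.
apply/negP => down_m.
have [M /[dup] maxM /andP[MC _] mM] := exists_maximal_above (C_down_up down_m up_m).
have bkM : le (join S b k) M.
  apply: join_le (CS MC) (le_trans bm mM) (le_trans kx (below_max _ maxM)) => //.
by rewrite (down_le (down_C MC) (join_in latS bS kS) bkM) in not_down_bk.
Qed.

Lemma left_modular_lift1 k x : k \in S -> left_modular_elt S k ->
  x \in heart C -> le x k -> left_modular_elt T (rcons k true).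
Proof.
move=> kS lm_k /heartP[xC _ above_min] xk.
have kT : rcons k true \in T.
  by rewrite mem_doubling kS; apply: up_le (up_C xC) (CS xC) kS xk.
apply: (left_modular_elt_of_le lattice_doubling kT).
move=> _ _ /[dup] /doubling_rcons[b [e ->]] bT /[dup] /doubling_rcons[c [f ->]] cT.
rewrite /lt le_rcons => /andP[_ /andP[bc _]].
have bS := mem_doubling_base bT; have cS := mem_doubling_base cT.
rewrite meet_join_doubling // join_meet_doubling //.
rewrite (left_modular_law_le latS lm_k) // le_rcons lexx orbT /=.
set m := join S b (meet S k c); have kcS := meet_in latS kS cS.
have mS : m \in S by apply: join_in.
apply/implyP => /andP[-> up_m] /=.
case: (boolP (down m)) => [down_m|]; last by rewrite !orbT.
have [mu /[dup] minmu /andP[muC _] mum] := exists_minimal_below (C_down_up down_m up_m).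
have mu_kc : le mu (meet S k c).
  apply: le_meet (CS muC) (le_trans (above_min _ minmu) xk) _ => //.
  by apply: le_trans mum _; apply: join_le => //; apply: le_meetr.
by rewrite (up_le (up_C muC) (CS muC) kcS mu_kc) orbT.
Qed.

Lemma lift_chain_maximal K x : maximal_chain S K -> x \in K -> x \in C ->
  maximal_chain T (lift_chain K x).
Proof.
move=> [[KS totK] maxK] xK xC; have xS := KS _ xK.
split; first split.
- move=> _ /[dup] /lift_chain_rcons[y [b ->]].
  rewrite mem_lift_chain mem_doubling => /andP[/KS yS hb]; rewrite yS.
  case: b hb => [xy|yx]; first exact: up_le (up_C xC) xS yS xy.
  exact: down_le (down_C xC) yS yx.
- move=> _ _ /[dup] /lift_chain_rcons[y [b ->]] + /[dup] /lift_chain_rcons[z [c ->]].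
  rewrite !mem_lift_chain !le_rcons => /andP[yK hy] /andP[zK hz].
  case: b hy => hy; case: c hz => hz; rewrite /= ?andbT ?andbF ?orbF //;
    try exact: totK.
    exact: le_trans hz hy.
  exact: le_trans hy hz.
- move=> _ /[dup] /doubling_rcons[y [b ->]] /mem_doubling_base yS comp.
  have yK : y \in K.
    apply: maxK yS _ => k kK; have [kx|xk] := orP (totK _ _ kK xK).
      by apply: (@comparable_rcons _ _ false b); apply: comp; rewrite mem_lift_chain kK.
    by apply: (@comparable_rcons _ _ true b); apply: comp; rewrite mem_lift_chain kK.
  rewrite mem_lift_chain yK; case: b comp => comp.
    move: (comp (rcons x false)); rewrite mem_lift_chain xK lexx !le_rcons /=.
    by rewrite andbT andbF orbF; apply.
  move: (comp (rcons x true)); rewrite mem_lift_chain xK lexx !le_rcons /=.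
  by rewrite andbF andbT; apply.
Qed.

Lemma left_modular_doubling_of_heart x K : x \in heart C ->
  maximal_left_modular_chain S K -> x \in K -> left_modular_lattice T.
Proof.
move=> xH [maxK lmK] xK; have /heartP[xC _ _] := xH.
exists (lift_chain K x); split; first exact: lift_chain_maximal.
move=> _ /[dup] /lift_chain_rcons[y [b ->]]; rewrite mem_lift_chain => /andP[yK hb].
have yS := maxK.1.1 _ yK.
case: b hb => hb; first exact: left_modular_lift1 yS (lmK _ yK) xH hb.
exact: left_modular_lift0 yS (lmK _ yK) xH hb.
Qed.

Section ChainInDoubling.
Variable K : seq elt.
Hypotheses (KT : {subset K <= T}) (totK : totally_ordered K).
Hypothesis maxK :
  forall z, z \in T -> (forall w, w \in K -> le w z || le z w) -> z \in K.
Hypothesis lmK : forall a, a \in K -> left_modular_elt T a.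
Hypothesis C0 : C != [::].

Lemma chain_rcons w : w \in K -> exists y b, w = rcons y b.
Proof. by move/KT/doubling_rcons. Qed.

Lemma C_elt : exists w, w \in C.
Proof. by case: (C) C0 => // w ? _; exists w; rewrite inE eqxx. Qed.

Lemma chain_nonempty : has predT K.
Proof.
have [w wC] := C_elt; have [w0T _ _] := doubled_lt wC.
case Ke: K => [|u ?]; last by apply/hasP; exists u; rewrite ?mem_head.
by have := maxK w0T; rewrite Ke in_nil; apply=> u; rewrite in_nil.
Qed.

Lemma chain_bit0_le c y : rcons c true \in K -> rcons y false \in K -> le y c.
Proof. by move=> cK yK; have := totK yK cK; rewrite !le_rcons andbF orbF andbT. Qed.

Lemma chain_bit1_ge c y : rcons c false \in K -> rcons y true \in K -> le c y.
Proof. by move=> cK yK; have := totK cK yK; rewrite !le_rcons andbF orbF andbT. Qed.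

Lemma chain_bit0 : exists x, rcons x false \in K.
Proof.
have [w wC] := C_elt.
have [m /andP[mK _] m_min] := chain_has_min totK chain_nonempty.
have [y [[] em]] := chain_rcons mK; subst m; last by exists y.
have yS := mem_doubling_base (KT mK).
have wS := CS wC; have zS := meet_in latS yS wS.
exists (meet S y w); apply: maxK => [|u uK].
  by rewrite mem_doubling zS; apply: down_le (down_C wC) zS (le_meetr latS yS wS).
apply/orP; right; apply: le_trans (m_min u uK isT).
by rewrite le_rcons (le_meetl latS yS wS).
Qed.

Lemma chain_bit1 : exists y, rcons y true \in K.
Proof.
have [w wC] := C_elt.
have [m /andP[mK _] m_max] := chain_has_max totK chain_nonempty.
have [x [[] ex]] := chain_rcons mK; subst m; first by exists x.
have xS := mem_doubling_base (KT mK).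
have wS := CS wC; have zS := join_in latS xS wS.
exists (join S x w); apply: maxK => [|u uK].
  by rewrite mem_doubling zS; apply: up_le (up_C wC) wS zS (le_joinr latS xS wS).
apply/orP; left; apply: le_trans (m_max u uK isT) _.
by rewrite le_rcons (le_joinl latS xS wS).
Qed.

Lemma chain_bit0_max : exists2 x, rcons x false \in K &
  forall y, rcons y false \in K -> le y x.
Proof.
have [x xK] := chain_bit0.
have [|m /andP[mK bit_m] m_max] := @chain_has_max K (fun w => ~~ last false w) totK.
  by apply/hasP; exists (rcons x false); rewrite ?last_rcons.
have [x0 [b em]] := chain_rcons mK; subst m; move: bit_m mK m_max.
rewrite last_rcons => /negbTE-> x0K m_max; exists x0 => // y yK.
by have := m_max _ yK; rewrite last_rcons le_rcons andbT; apply.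
Qed.

Lemma chain_bit1_min : exists2 y, rcons y true \in K &
  forall z, rcons z true \in K -> le y z.
Proof.
have [y yK] := chain_bit1.
have [|m /andP[mK bit_m] m_min] := @chain_has_min K (last false) totK.
  by apply/hasP; exists (rcons y true); rewrite ?last_rcons.
have [y1 [b em]] := chain_rcons mK; subst m; move: bit_m mK m_min.
rewrite last_rcons => -> y1K m_min; exists y1 => // z zK.
by have := m_min _ zK; rewrite last_rcons le_rcons andbT; apply.
Qed.

(* The gap between the largest (x0,0) and the smallest (y1,1) on the chain is
   closed by the left modularity of (y1,1): y1 /\ w lies in C for any w in C
   above x0, and it is x0. *)
Lemma chain_doubled : exists c : elt, rcons c false \in K /\ rcons c true \in K.
Proof.
have [x0 x0K x0_max] := chain_bit0_max; have [y1 y1K y1_min] := chain_bit1_min.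
have between u : u \in T -> le (rcons x0 false) u -> le u (rcons y1 true) -> u \in K.
  move=> uT x0u uy1; apply: maxK uT _ => w wK.
  have [y [b ew]] := chain_rcons wK; subst w; case: b wK => wK.
    by apply/orP; right; apply: le_trans uy1 _; rewrite le_rcons y1_min.
  by apply/orP; left; apply: le_trans _ x0u; rewrite le_rcons x0_max.
have x0S := mem_doubling_base (KT x0K); have y1S := mem_doubling_base (KT y1K).
have [w wC x0w] : exists2 w, w \in C & le x0 w.
  by have := KT x0K; rewrite mem_doubling downP => /andP[_ /andP[_ /hasP]].
have wS := CS wC; have zS := meet_in latS y1S wS.
have x0y1 := chain_bit1_ge x0K y1K.
have x0z := le_meet latS y1S wS x0S x0y1 x0w.
have zK : rcons (meet S y1 w) false \in K.
  apply: between; rewrite ?le_rcons ?x0z ?(le_meetl latS y1S wS) //.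
  by rewrite mem_doubling zS; apply: down_le (down_C wC) zS (le_meetr latS y1S wS).
have z_x0 : meet S y1 w = x0 := le_anti (x0_max _ zK) x0z.
have up_z := left_modular_bit1_meet (KT y1K) (lmK y1K) wC.
exists x0; split=> //; apply: between; rewrite ?le_rcons ?lexx ?x0y1 //.
by rewrite mem_doubling x0S -z_x0 up_z.
Qed.

Lemma doubled_in_heart c : rcons c false \in K -> rcons c true \in K -> c \in heart C.
Proof.
move=> c0K c1K; have c0T := KT c0K; have c1T := KT c1K.
have cS := mem_doubling_base c0T.
have down_c : down c by move: c0T; rewrite mem_doubling => /andP[].
have up_c : up c by move: c1T; rewrite mem_doubling => /andP[].
apply/heartP; split; first exact: C_down_up.
- move=> M /[dup] maxM /andP[MC _]; have MS := CS MC.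
  have jS := join_in latS MS cS.
  have jC : join S M c \in C.
    apply: C_down_up; first exact: left_modular_bit0_join c0T (lmK c0K) MC.
    exact: up_le up_c cS jS (le_joinr latS MS cS).
  by rewrite -(maximal_in_le_eq maxM jC (le_joinl latS MS cS)) le_joinr.
- move=> m /[dup] minm /andP[mC _]; have mS := CS mC.
  have zS := meet_in latS cS mS.
  have zC : meet S c m \in C.
    apply: C_down_up; last exact: left_modular_bit1_meet c1T (lmK c1K) mC.
    exact: down_le (down_C mC) zS (le_meetr latS cS mS).
  by rewrite -(minimal_in_le_eq minm zC (le_meetr latS cS mS)) le_meetl.
Qed.

Definition proj_chain := [seq y <- S | (rcons y false \in K) || (rcons y true \in K)].

Lemma mem_proj_chain y :
  (y \in proj_chain) = (rcons y false \in K) || (rcons y true \in K).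
Proof. by rewrite mem_filter andb_idr // => /orP[] /KT /mem_doubling_base. Qed.

Lemma proj_chain_maximal_left_modular c :
  rcons c false \in K -> rcons c true \in K ->
  maximal_left_modular_chain S proj_chain.
Proof.
move=> c0K c1K; have cS := mem_doubling_base (KT c0K).
split; last first.
  move=> y; rewrite mem_proj_chain => /orP[] yK;
  exact: left_modular_elt_proj (KT yK) (lmK yK).
split; first split.
- by move=> y; rewrite mem_filter => /andP[].
- move=> y z; rewrite !mem_proj_chain => /orP[] yK /orP[] zK;
  exact: comparable_rcons (totK yK zK).
move=> z zS comp; rewrite mem_proj_chain.
have cK : c \in proj_chain by rewrite mem_proj_chain c0K.
have [cz|zc] := orP (comp c cK).
  have zT : rcons z true \in T.
    rewrite mem_doubling zS; move: (KT c1K).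
    by rewrite mem_doubling => /andP[_ /up_le]; apply.
  apply/orP; right; apply: maxK zT _ => w wK.
  have [y [b ew]] := chain_rcons wK; subst w.
  case: b wK => wK; rewrite !le_rcons /= ?andbT.
    by apply: comp; rewrite mem_proj_chain wK orbT.
  by rewrite (le_trans (chain_bit0_le c1K wK) cz).
have zT : rcons z false \in T.
  rewrite mem_doubling zS; move: (KT c0K).
  by rewrite mem_doubling => /andP[_ /down_le]; apply.
apply/orP; left; apply: maxK zT _ => w wK.
have [y [b ew]] := chain_rcons wK; subst w.
case: b wK => wK; rewrite !le_rcons /= ?andbT.
  by rewrite (le_trans zc (chain_bit1_ge c0K wK)) orbT.
by apply: comp; rewrite mem_proj_chain wK.
Qed.

End ChainInDoubling.

Lemma left_modular_doubling : C != [::] ->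
  (left_modular_lattice T <->
   exists x K, x \in heart C /\ maximal_left_modular_chain S K /\ x \in K).
Proof.
move=> C0; split; last first.
  by case=> x [K [xH [mlK xK]]]; apply: left_modular_doubling_of_heart xH mlK xK.
case=> K [[[KT totK] maxK] lmK].
have [c [c0K c1K]] := chain_doubled KT totK maxK lmK C0.
exists c, (proj_chain K); split; first exact (doubled_in_heart KT lmK c0K c1K).
split; first exact (proj_chain_maximal_left_modular KT totK maxK lmK c0K c1K).
by rewrite (mem_proj_chain KT) c0K.
Qed.

End Doubling.

Lemma Elat_rcons Cs C : Elat (rcons Cs C) = doubling (Elat Cs) C.
Proof. by rewrite /Elat foldl_rcons. Qed.

Lemma nth_take_rcons (Cs : seq (seq elt)) C i : i < size Cs ->
  nth [::] (rcons Cs C) i = nth [::] Cs i /\ take i (rcons Cs C) = take i Cs.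
Proof. by move=> lt_i; rewrite nth_rcons lt_i -cats1 takel_cat // ltnW. Qed.

Lemma nth_take_rcons_size (Cs : seq (seq elt)) C :
  nth [::] (rcons Cs C) (size Cs) = C /\ take (size Cs) (rcons Cs C) = Cs.
Proof. by rewrite nth_rcons ltnn eqxx -cats1 take_size_cat. Qed.

Lemma valid_seq_rcons Cs C : valid_seq (rcons Cs C) ->
  valid_seq Cs /\ [/\ C != [::], {subset C <= Elat Cs} & convex (Elat Cs) C].
Proof.
rewrite /valid_seq size_rcons => valid; split=> [i lt_i|].
  by move: (valid i (ltnW lt_i)); have [-> ->] := nth_take_rcons C lt_i.
by move: (valid _ (ltnSn _)); have [-> ->] := nth_take_rcons_size Cs C.
Qed.

Lemma lattice_Elat Cs : valid_seq Cs -> lattice (Elat Cs).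
Proof.
elim/last_ind: Cs => [_|Cs C IH /valid_seq_rcons[valid_Cs [_ CS convexC]]].
  by move=> x y; rewrite !inE => /eqP-> /eqP->.
by rewrite Elat_rcons; apply: lattice_doubling => //; apply: IH.
Qed.

Lemma left_modular_lattice_Elat_nil : left_modular_lattice (Elat [::]).
Proof.
exists [:: [::]]; split; first split; first split.
- by [].
- by move=> x y; rewrite !inE => /eqP-> /eqP->.
- by [].
by move=> a _ b c; rewrite !inE => /eqP-> /eqP->; rewrite ltxx.
Qed.

Theorem theorem3p12 (Cs : seq (seq elt)) :
  valid_seq Cs ->
  (left_modular_lattice (Elat Cs) <->
   (forall i, i < size Cs ->
      exists x K, x \in heart (nth [::] Cs i) /\
        maximal_left_modular_chain (Elat (take i Cs)) K /\ x \in K)).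
Proof.
elim/last_ind: Cs => [_|Cs C IH /valid_seq_rcons[valid_Cs [C0 CS convexC]]].
  by split=> // _; apply: left_modular_lattice_Elat_nil.
have [last_nth last_take] := nth_take_rcons_size Cs C.
have lm_step := left_modular_doubling (lattice_Elat valid_Cs) CS convexC C0.
rewrite Elat_rcons size_rcons; split=> [/lm_step[x [K [xH [mlK xK]]]] i | steps].
  rewrite ltnS leq_eqVlt => /predU1P[-> | lt_i].
    by rewrite last_nth last_take; exists x, K.
  have [-> ->] := nth_take_rcons C lt_i.
  by apply: (proj1 (IH valid_Cs)) lt_i; exists K.
by apply/lm_step; have := steps _ (ltnSn _); rewrite last_nth last_take.
Qed.
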